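(* Let $k\ge d$ and let $(\mathbf a_1,\mathbf b_1),\dots,(\mathbf a_k,\mathbf b_k)$ be i.i.d. copies of a pair of random vectors $(\mathbf a,\mathbf b)$ in $\mathbb R^d\times\mathbb R^d$ such that $\mathbb E[\mathbf a\mathbf b^\top]$ exists (all entries $\mathbb E[a_ib_j]$ finite). Let $\mathbf A,\mathbf B\in\mathbb R^{k\times d}$ have $i$-th rows $\mathbf a_i^\top$ and $\mathbf b_i^\top$. Then $\mathbb E[\det(\mathbf A^\top\mathbf B)]=d!\binom{k}{d}\det(\mathbb E[\mathbf a\mathbf b^\top])$. *)

From HB Require Import structures.
From mathcomp Require Import all_boot all_order all_algebra.
From mathcomp Require Import all_classical all_reals all_analysis.
Set Implicit Arguments. Unset Strict Implicit. Unset Printing Implicit Defensive.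
Import Order.TTheory GRing.Theory Num.Theory.
Local Open Scope classical_set_scope.
Local Open Scope ring_scope.

Section defs.
Context {dT : measure_display} {T : measurableType dT} {R : realType}.

Definition pair_events {n : nat} (a b : T -> 'rV[R]_n) : set (set T) :=
  [set E | exists (j : 'I_n) (B : set R), measurable B /\
     (E = (fun x => a x 0 j) @^-1` B \/ E = (fun x => b x 0 j) @^-1` B)].

Definition pair_sigma {n : nat} (a b : T -> 'rV[R]_n) : set (set T) :=
  <<s pair_events a b >>.

(* Mutual independence of the random pairs (a i, b i), i < k:
   the generated sigma-algebras satisfy the product rule
   (taking E i = setT for unused indices covers every subfamily). *)
Definition mutually_independent_pairs (P : probability T R) {k n : nat}
  (a b : 'I_k -> T -> 'rV[R]_n) : Prop :=
  forall E : 'I_k -> set T, (forall i, pair_sigma (a i) (b i) (E i)) ->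
    P (\bigcap_i E i) = (\prod_(i < k) P (E i))%E.

End defs.

Definition joint_rect {dT : measure_display} {T : measurableType dT}
  {R : realType} (P : probability T R) {n : nat} (a b : T -> 'rV[R]_n)
  (B C : 'I_n -> set R) : \bar R :=
  P [set x | (forall j, B j (a x 0 j)) /\ (forall j, C j (b x 0 j))].

(* (a, b) on (T,P) and (a', b') on (T',P') have the same joint distribution
   on R^n x R^n: they agree on all measurable rectangles, a pi-system
   generating the Borel sigma-algebra of R^(2n). *)
Definition same_joint_law {dT dT' : measure_display} {T : measurableType dT}
  {T' : measurableType dT'} {R : realType} (P : probability T R)
  (P' : probability T' R) {n : nat} (a b : T -> 'rV[R]_n)
  (a' b' : T' -> 'rV[R]_n) : Prop :=
  forall B C : 'I_n -> set R, (forall j, measurable (B j)) ->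
    (forall j, measurable (C j)) ->
    joint_rect P a b B C = joint_rect P' a' b' B C.

Definition stack_rows {T : Type} {R : Type} {k n : nat}
  (a : 'I_k -> T -> 'rV[R]_n) (x : T) : 'M[R]_(k, n) :=
  \matrix_(i < k, j < n) a i x 0 j.

From HB Require Import structures.
From mathcomp Require Import all_boot all_order all_algebra.
From mathcomp Require Import all_classical all_reals all_analysis.
From mathcomp Require Import perm measurable_realfun lra.
Import Order.TTheory GRing.Theory Num.Theory.
Import numFieldNormedType.Exports.
Local Open Scope classical_set_scope.
Local Open Scope ring_scope.

(* Expanding det(A^T B) over the rows gives a sum, over the injections
   f : [d] -> [k] and the permutations s of [d], of
   sign(s) * prod_j a_{f j, j} b_{f j, s j}.  As f is injective, the factors of
   each product come from distinct rows, so by independence its expectation is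
   prod_j E[a_j b_{s j}]; the sum over s is then det E[a b^T], and there are
   k!/(k-d)! = d! C(k, d) injections.
   Independence and equality in law are only given on generating sets and only
   second moments are assumed integrable, so both facts are first established
   for step functions of the entries (finite combinations of indicators) and
   then extended by monotone convergence, which yields integrability, and
   dominated convergence, which yields the value. *)

Section indicator_combination.
Context {d : measure_display} {T : measurableType d} {R : realType}.
Variable mu : {finite_measure set T -> \bar R}.

Lemma integral_indic_combo (I : finType) (c : I -> R) (E : I -> set T) :
  (forall i, measurable (E i)) ->
  (\int[mu]_x (\sum_i c i * \1_(E i) x)%:E = (\sum_i c i * fine (mu (E i)))%:E)%E.
Proof.
move=> mE; under eq_integral do rewrite -sumEFin.
under eq_integral do under eq_bigr do rewrite EFinM.
rewrite integral_sum // => [|i]; last first.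
  by apply: integrableZl => //; exact: integrable_indic.
rewrite -sumEFin; apply: eq_bigr => i _.
rewrite integralZl //; last exact: integrable_indic.
by rewrite integral_indic // setIT EFinM fineK // fin_num_measure.
Qed.

End indicator_combination.

Lemma indic_bigcap {T : Type} {R : realType} (I : finType) (F : I -> set T) x :
  \1_(\bigcap_i F i) x = \prod_i (\1_(F i) x : R).
Proof.
have [Fx|nFx] := pselect ((\bigcap_i F i) x).
  by rewrite indicE mem_set // big1 // => i _; rewrite indicE mem_set //; exact: Fx.
rewrite indicE memNset //.
have [i nFix] : exists i, ~ F i x.
  by apply: contra_notP nFx => /forallNP Fx i _; exact: contra_notP (Fx i).
by rewrite (bigD1 i) //= indicE memNset // mul0r.
Qed.

Section independent_pairs.
Context {dT : measure_display} {T : measurableType dT} {R : realType}.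
Context {P : probability T R} {k n : nat} {ak bk : 'I_k -> T -> 'rV[R]_n}.
Hypothesis indep : mutually_independent_pairs P ak bk.

Lemma integral_prod_indep_combo (M : finType) (c : 'I_k -> M -> R)
    (E : 'I_k -> M -> set T) :
  (forall i m, pair_sigma (ak i) (bk i) (E i m)) ->
  (forall i m, measurable (E i m)) ->
  (\int[P]_x (\prod_i \sum_m c i m * \1_(E i m) x)%:E =
    (\prod_i \sum_m c i m * fine (P (E i m)))%:E)%E.
Proof.
move=> sE mE.
have mI (F : {ffun 'I_k -> M}) : measurable (\bigcap_i E i (F i)).
  by apply: fin_bigcap_measurable => //; exact: finite_finset.
under eq_integral => x _.
  rewrite bigA_distr_bigA /=.
  under eq_bigr => F _ do rewrite big_split /= -indic_bigcap.
  over.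
rewrite (integral_indic_combo P _ _ _ mI); congr (_%:E).
rewrite bigA_distr_bigA /=; apply: eq_bigr => F _.
rewrite big_split /= indep //.
have fin i : P (E i (F i)) \is a fin_num by exact: fin_num_measure.
by rewrite -(eq_bigr _ (fun i _ => fineK (fin i))) prodEFin.
Qed.

End independent_pairs.

Section pair_sigma.
Context {dT : measure_display} {T : measurableType dT} {R : realType} {n : nat}.
Variables a b : T -> 'rV[R]_n.

Lemma pair_sigmaT : pair_sigma a b setT.
Proof. exact: (@measurableT _ (g_sigma_algebraType (pair_events a b))). Qed.

Lemma pair_sigma_rect j l (S S' : set R) : measurable S -> measurable S' ->
  pair_sigma a b ((fun x => a x 0 j) @^-1` S `&` (fun x => b x 0 l) @^-1` S').
Proof.
move=> mS mS'; apply: (@measurableI _ (g_sigma_algebraType (pair_events a b)));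
  apply: sub_sigma_algebra; [exists j, S | exists l, S']; split=> //; by [left | right].
Qed.

End pair_sigma.

Definition step_fun {R : realType} (phi : R -> R) : Prop :=
  exists (I : finType) (c : I -> R) (S : I -> set R),
    (forall i, measurable (S i)) /\ forall u, phi u = \sum_i c i * \1_(S i) u.

Section step_fun.
Context {R : realType}.
Implicit Types phi psi : R -> R.

Lemma measurable_step_fun {phi} : step_fun phi -> measurable_fun setT phi.
Proof.
move=> [I [c [S [mS ephi]]]]; rewrite (funext ephi).
apply: measurable_sum => i; apply: measurable_funM => //; exact: measurable_indic.
Qed.

Lemma step_funD {phi psi} : step_fun phi -> step_fun psi -> step_fun (phi \+ psi).
Proof.
move=> [I [c [S [mS ephi]]]] [J [c' [S' [mS' epsi]]]].
exists (I + J)%type, (fun i => match i with inl i => c i | inr j => c' j end),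
  (fun i => match i with inl i => S i | inr j => S' j end).
by split=> [[]|u] //; rewrite big_sumType /= ephi epsi.
Qed.

Lemma step_funN {phi} : step_fun phi -> step_fun (fun u => - phi u).
Proof.
move=> [I [c [S [mS ephi]]]]; exists I, (fun i => - c i), S; split=> // u.
by rewrite ephi -sumrN; apply: eq_bigr => i _; rewrite mulNr.
Qed.

Lemma step_fun_approx (f : R -> \bar R) n :
  measurable_fun setT f -> step_fun (approx setT f n).
Proof.
move=> mf; apply: step_funD.
  exists 'I_(n * 2 ^ n), (fun k : 'I_(n * 2 ^ n) => k%:R * 2 ^- n),
    (fun k : 'I_(n * 2 ^ n) => dyadic_approx setT f n k).
  split=> // k; rewrite /dyadic_approx; case: ifPn => // _; rewrite -preimage_comp.
  by apply: mf => //; apply/measurable_image_EFin; exact: measurable_itv.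
exists 'I_1, (fun=> n%:R), (fun=> integer_approx setT f n).
by split=> [_|u]; [exact: emeasurable_fun_c_infty | rewrite big_ord1].
Qed.

Lemma step_fun_mul {phi psi} : step_fun phi -> step_fun psi ->
  exists (I : finType) (c : I -> R) (S S' : I -> set R),
    (forall i, measurable (S i) /\ measurable (S' i)) /\
    forall u v, phi u * psi v = \sum_i c i * (\1_(S i) u * \1_(S' i) v).
Proof.
move=> [I [c [S [mS ephi]]]] [J [c' [S' [mS' epsi]]]].
exists (I * J)%type, (fun ij => c ij.1 * c' ij.2), (fun ij => S ij.1),
  (fun ij => S' ij.2); split=> // u v.
rewrite ephi epsi big_distrlr /= pair_bigA /=; apply: eq_bigr => ij _.
by rewrite mulrACA.
Qed.

End step_fun.

Definition monotone_approx {T : Type} {R : realType}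
    (g : nat -> T -> R) (h : T -> R) : Prop :=
  [/\ forall n x, 0 <= g n x, forall x m n, (m <= n)%N -> g m x <= g n x &
      forall x, g n x @[n --> \oo] --> `|h x|].

Definition dominated_approx {T : Type} {R : realType}
    (s : nat -> T -> R) (h : T -> R) : Prop :=
  (forall n x, `|s n x| <= `|h x|) /\ forall x, s n x @[n --> \oo] --> h x.

Section approx_algebra.
Context {T U : Type} {R : realType}.
Implicit Types (g s : nat -> T -> R) (h : T -> R).

Lemma monotone_approx_comp {g : nat -> U -> R} {h : U -> R} (X : T -> U) :
  monotone_approx g h -> monotone_approx (fun n x => g n (X x)) (h \o X).
Proof. by move=> [g0 gnd gcvg]; split=> *; [exact: g0 | exact: gnd | exact: gcvg]. Qed.

Lemma dominated_approx_comp {s : nat -> U -> R} {h : U -> R} (X : T -> U) :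
  dominated_approx s h -> dominated_approx (fun n x => s n (X x)) (h \o X).
Proof. by move=> [sh scvg]; split=> *; [exact: sh | exact: scvg]. Qed.

Lemma monotone_approx1 : monotone_approx (fun _ _ => 1) (fun _ : T => 1 : R).
Proof. by split=> // x; rewrite normr1; exact: cvg_cst. Qed.

Lemma dominated_approx1 : dominated_approx (fun _ _ => 1) (fun _ : T => 1 : R).
Proof. by split=> // x; exact: cvg_cst. Qed.

Lemma monotone_approxM {g h g' h'} : monotone_approx g h -> monotone_approx g' h' ->
  monotone_approx (fun n x => g n x * g' n x) (h \* h').
Proof.
move=> [g0 gnd gcvg] [g'0 g'nd g'cvg]; split=> [n x|x m n mn|x].
- exact: mulr_ge0.
- by rewrite ler_pM ?gnd ?g'nd.
- by rewrite normrM; apply: cvgM.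
Qed.

Lemma dominated_approxM {s h s' h'} : dominated_approx s h -> dominated_approx s' h' ->
  dominated_approx (fun n x => s n x * s' n x) (h \* h').
Proof.
move=> [sh scvg] [s'h s'cvg]; split=> [n x|x]; last exact: cvgM.
by rewrite !normrM ler_pM.
Qed.

Lemma eq_monotone_approx {g h g' h'} : monotone_approx g h ->
  (forall n x, g n x = g' n x) -> (forall x, h x = h' x) -> monotone_approx g' h'.
Proof.
move=> + eg /funext<-.
by have <- : g = g' by apply/funext=> n; apply/funext=> x; exact: eg.
Qed.

Lemma eq_dominated_approx {s h s' h'} : dominated_approx s h ->
  (forall n x, s n x = s' n x) -> (forall x, h x = h' x) -> dominated_approx s' h'.
Proof.
move=> + es /funext<-.
by have <- : s = s' by apply/funext=> n; apply/funext=> x; exact: es.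
Qed.

Lemma monotone_approx_prod {I : Type} (r : seq I) {g : I -> nat -> T -> R}
    {h : I -> T -> R} : (forall i, monotone_approx (g i) (h i)) ->
  monotone_approx (fun n x => \prod_(i <- r) g i n x) (fun x => \prod_(i <- r) h i x).
Proof.
move=> gh; elim: r => [|i r IHr].
  by apply: (eq_monotone_approx monotone_approx1) => *; rewrite big_nil.
by apply: (eq_monotone_approx (monotone_approxM (gh i) IHr)) => *; rewrite big_cons.
Qed.

Lemma dominated_approx_prod {I : Type} (r : seq I) {s : I -> nat -> T -> R}
    {h : I -> T -> R} : (forall i, dominated_approx (s i) (h i)) ->
  dominated_approx (fun n x => \prod_(i <- r) s i n x) (fun x => \prod_(i <- r) h i x).
Proof.
move=> sh; elim: r => [|i r IHr].
  by apply: (eq_dominated_approx dominated_approx1) => *; rewrite big_nil.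
by apply: (eq_dominated_approx (dominated_approxM (sh i) IHr)) => *; rewrite big_cons.
Qed.

End approx_algebra.

Section real_approx.
Context {R : realType}.
Implicit Types u v : R.

Let pos u : \bar R := (Num.max u 0)%:E.
Let neg u : \bar R := (Num.max (- u) 0)%:E.

Definition approx_real n u := approx setT pos n u - approx setT neg n u.
Definition approx_norm n u := approx setT pos n u + approx setT neg n u.

Let measurable_pos : measurable_fun setT pos.
Proof. by apply/measurable_EFinP; apply: measurable_maxr. Qed.

Let measurable_neg : measurable_fun setT neg.
Proof. by apply/measurable_EFinP; apply: measurable_maxr. Qed.

Let pos_ge0 u : (0 <= pos u)%E. Proof. by rewrite lee_fin le_max lexx orbT. Qed.
Let neg_ge0 u : (0 <= neg u)%E. Proof. by rewrite lee_fin le_max lexx orbT. Qed.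

Let approx_ge0 (f : R -> \bar R) n u : 0 <= approx setT f n u.
Proof.
apply: addr_ge0; last by rewrite mulr_ge0.
by apply: sumr_ge0 => k _; rewrite !mulr_ge0.
Qed.

Let cvg_approx_pos u : approx setT pos n u @[n --> \oo] --> Num.max u 0.
Proof. exact: (cvg_approx (fun v _ => pos_ge0 v) (I : setT u) (ltry _)). Qed.

Let cvg_approx_neg u : approx setT neg n u @[n --> \oo] --> Num.max (- u) 0.
Proof. exact: (cvg_approx (fun v _ => neg_ge0 v) (I : setT u) (ltry _)). Qed.

Let max_subr u : Num.max u 0 - Num.max (- u) 0 = u.
Proof. by rewrite !maxEle; case: ifP => ?; case: ifP => ?; lra. Qed.

Let max_addr u : Num.max u 0 + Num.max (- u) 0 = `|u|.
Proof.
rewrite !maxEle; case: (lerP 0 u) => u0;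
  [rewrite ger0_norm | rewrite ltr0_norm] => //; by case: ifP => ?; case: ifP => ?; lra.
Qed.

Lemma step_fun_approx_real n : step_fun (approx_real n).
Proof.
by apply: step_funD; [|apply: step_funN]; exact: step_fun_approx.
Qed.

Lemma step_fun_approx_norm n : step_fun (approx_norm n).
Proof. by apply: step_funD; exact: step_fun_approx. Qed.

Lemma monotone_approx_norm : monotone_approx approx_norm id.
Proof.
split=> [n u|u m n mn|u]; first exact: addr_ge0.
  by apply: lerD;
    [have /lefP := nd_approx setT pos mn | have /lefP := nd_approx setT neg mn].
by rewrite /= -max_addr; apply: cvgD.
Qed.

Lemma dominated_approx_real : dominated_approx approx_real id.
Proof.
split=> [n u|u]; last by rewrite /= -[X in _ --> X]max_subr; apply: cvgB.
rewrite /= /approx_real -[`|u|]max_addr (le_trans (ler_normB _ _)) //.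
rewrite !ger0_norm //; apply: lerD.
  by rewrite -lee_fin; exact: (le_approx n (fun v _ => pos_ge0 v)).
by rewrite -lee_fin; exact: (le_approx n (fun v _ => neg_ge0 v)).
Qed.

End real_approx.

Section approx_mul.
Context {T : Type} {R : realType}.
Variables X Y : T -> R.

Lemma monotone_approx_norm_mul :
  monotone_approx (fun n x => approx_norm n (X x) * approx_norm n (Y x)) (X \* Y).
Proof.
exact: monotone_approxM (monotone_approx_comp X monotone_approx_norm)
  (monotone_approx_comp Y monotone_approx_norm).
Qed.

Lemma dominated_approx_real_mul :
  dominated_approx (fun n x => approx_real n (X x) * approx_real n (Y x)) (X \* Y).
Proof.
exact: dominated_approxM (dominated_approx_comp X dominated_approx_real)
  (dominated_approx_comp Y dominated_approx_real).
Qed.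

End approx_mul.

Lemma cvg_bigprod {R : realType} (I : Type) (r : seq I) (u : I -> nat -> R)
    (l : I -> R) : (forall i, u i n @[n --> \oo] --> l i) ->
  \prod_(i <- r) u i n @[n --> \oo] --> \prod_(i <- r) l i.
Proof.
move=> ul; elim: r => [|i r IHr].
  by under eq_fun do rewrite big_nil; rewrite big_nil; exact: cvg_cst.
by under eq_fun do rewrite big_cons; rewrite big_cons; exact: cvgM.
Qed.

Lemma cvgr_EFin {R : realType} (u : nat -> R) (l : R) :
  u n @[n --> \oo] --> l -> (u n)%:E @[n --> \oo] --> l%:E.
Proof. by move=> ul; apply: cvg_EFin => //; exact: nearW. Qed.

Section integral_approx.
Context {d : measure_display} {T : measurableType d} {R : realType}.
Variable mu : {measure set T -> \bar R}.
Implicit Types (g s : nat -> T -> R) (h : T -> R).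

Lemma cvg_integral_monotone_approx {g h} :
  (forall n, measurable_fun setT (g n)) -> monotone_approx g h ->
  (\int[mu]_x (g n x)%:E)%E @[n --> \oo] --> (\int[mu]_x `|h x|%:E)%E.
Proof.
move=> mg [g0 gnd gcvg].
have := @cvg_monotone_convergence _ _ _ mu setT measurableT (fun n x => (g n x)%:E).
have -> : (fun x => limn (fun n => (g n x)%:E)) = (fun x => `|h x|%:E).
  apply/funext => x; apply: cvg_lim => //.
  exact/cvgr_EFin/gcvg.
apply=> [n|n x _|x _ m n mn]; rewrite ?lee_fin //; last exact: gnd.
exact/measurable_EFinP.
Qed.

Lemma integrable_monotone_approx {g h} (L : R) :
  (forall n, measurable_fun setT (g n)) -> measurable_fun setT h ->
  monotone_approx g h -> (\int[mu]_x (g n x)%:E)%E @[n --> \oo] --> L%:E ->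
  mu.-integrable setT (fun x => (h x)%:E).
Proof.
move=> mg mh gh gL; apply/integrableP; split; first exact/measurable_EFinP.
under eq_integral do rewrite abse_EFin.
by rewrite -(cvg_unique _ gL (cvg_integral_monotone_approx mg gh)) ?ltry.
Qed.

Lemma cvg_integral_dominated_approx {s h} :
  (forall n, measurable_fun setT (s n)) -> mu.-integrable setT (fun x => (h x)%:E) ->
  dominated_approx s h ->
  (\int[mu]_x (s n x)%:E)%E @[n --> \oo] --> (\int[mu]_x (h x)%:E)%E.
Proof.
move=> ms ih [sh scvg].
have mh : measurable_fun setT h by apply/measurable_EFinP; case/integrableP: ih.
have [] := @dominated_convergence _ _ _ mu setT measurableT (fun n x => (s n x)%:E)
  (fun x => (h x)%:E) (fun x => `|h x|%:E).
- by move=> n; apply/measurable_EFinP.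
- exact/measurable_EFinP.
- by apply: aeW => x _; exact/cvgr_EFin/scvg.
- by under eq_fun do rewrite -abse_EFin; exact: integrable_abse.
- by apply: aeW => x n _; rewrite lee_fin.
- by [].
Qed.

Lemma integral_bigsum {I : finType} (Pr : pred I) (F : I -> T -> R) :
  (forall i, Pr i -> mu.-integrable setT (fun x => (F i x)%:E)) ->
  mu.-integrable setT (fun x => (\sum_(i | Pr i) F i x)%:E) /\
  (\int[mu]_x (\sum_(i | Pr i) F i x)%:E = \sum_(i | Pr i) \int[mu]_x (F i x)%:E)%E.
Proof.
move=> iF; under eq_fun do rewrite -sumEFin.
split; first exact: integrable_sum.
under eq_integral do rewrite big_mkcond /=.
rewrite integral_sum // => [|i]; last first.
  by case: (boolP (Pr i)) => [/iF|_] //; exact: integrable0.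
rewrite [RHS]big_mkcond; apply: eq_bigr => i _.
by case: (boolP (Pr i)) => // _; exact: integral0.
Qed.

End integral_approx.

Lemma measurable_preimageI {d} {T : measurableType d} {R : realType}
    {X Y : T -> R} {S S' : set R} :
  measurable_fun setT X -> measurable_fun setT Y -> measurable S -> measurable S' ->
  measurable (X @^-1` S `&` Y @^-1` S').
Proof.
move=> mX mY mS mS'.
by apply: measurableI; rewrite -[X in measurable X]setTI; [exact: mX | exact: mY].
Qed.

Lemma measurable_mul_comp {d} {T : measurableType d} {R : realType}
    {X Y : T -> R} {phi : R -> R} :
  measurable_fun setT X -> measurable_fun setT Y -> measurable_fun setT phi ->
  measurable_fun setT (fun x => phi (X x) * phi (Y x)).
Proof. by move=> mX mY mphi; apply: measurable_funM; exact: measurableT_comp. Qed.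

(* The joint law is only known on rectangles, so only moments of step functions
   of the coordinates transfer directly. *)
Section moment_transfer.
Context {R : realType} {d0 : measure_display} {T0 : measurableType d0}
  {d : measure_display} {T : measurableType d}.
Context {mu : probability T R} {mu0 : probability T0 R}.
Context {al be : T -> R} {al0 be0 : T0 -> R}.
Hypotheses (mal : measurable_fun setT al) (mbe : measurable_fun setT be).
Hypotheses (mal0 : measurable_fun setT al0) (mbe0 : measurable_fun setT be0).
Hypothesis rect_eq : forall S S' : set R, measurable S -> measurable S' ->
  mu (al @^-1` S `&` be @^-1` S') = mu0 (al0 @^-1` S `&` be0 @^-1` S').
Hypothesis integrable_mul0 : mu0.-integrable setT (fun x => (al0 x * be0 x)%:E).

Lemma integral_step_fun_transfer phi psi : step_fun phi -> step_fun psi ->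
  (\int[mu]_x (phi (al x) * psi (be x))%:E =
   \int[mu0]_x (phi (al0 x) * psi (be0 x))%:E)%E.
Proof.
move=> /step_fun_mul/[apply] -[I [c [S [S' [mSS' ephipsi]]]]].
have rect_combo (U : Type) (X Y : U -> R) x : phi (X x) * psi (Y x) =
    \sum_i c i * \1_(X @^-1` S i `&` Y @^-1` S' i) x.
  by rewrite ephipsi; apply: eq_bigr => i _; rewrite indicI.
under eq_integral do rewrite rect_combo.
under [RHS]eq_integral do rewrite rect_combo.
have [mS mS'] := all_and2 mSS'.
rewrite (integral_indic_combo _ _ _ _
  (fun i => measurable_preimageI mal mbe (mS i) (mS' i))).
rewrite (integral_indic_combo _ _ _ _
  (fun i => measurable_preimageI mal0 mbe0 (mS i) (mS' i))).
by congr (_%:E); apply: eq_bigr => i _; congr (_ * fine _); exact: rect_eq.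
Qed.

Lemma integrable_mul_transfer :
  mu.-integrable setT (fun x => (al x * be x)%:E).
Proof.
have abs_fin : (\int[mu0]_x `|al0 x * be0 x|%:E)%E \is a fin_num.
  rewrite (eq_integral (abse \o (fun x => (al0 x * be0 x)%:E))) => [|x _].
    by apply: integrable_fin_num => //; exact: integrable_abse.
  by [].
apply: (integrable_monotone_approx mu (fine (\int[mu0]_x `|al0 x * be0 x|%:E)%E)
  _ (measurable_funM mal mbe) (monotone_approx_norm_mul al be)).
  move=> n.
  exact: measurable_mul_comp mal mbe (measurable_step_fun (step_fun_approx_norm n)).
rewrite fineK //.
have -> : (fun n => \int[mu]_x (approx_norm n (al x) * approx_norm n (be x))%:E)%E =
    (fun n => \int[mu0]_x (approx_norm n (al0 x) * approx_norm n (be0 x))%:E)%E.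
  by apply/funext => n; apply: integral_step_fun_transfer; exact: step_fun_approx_norm.
apply: cvg_integral_monotone_approx (monotone_approx_norm_mul al0 be0) => n.
exact: measurable_mul_comp mal0 mbe0 (measurable_step_fun (step_fun_approx_norm n)).
Qed.

Lemma integral_mul_transfer :
  (\int[mu]_x (al x * be x)%:E = \int[mu0]_x (al0 x * be0 x)%:E)%E.
Proof.
have mapprox n :=
  measurable_mul_comp mal mbe (measurable_step_fun (step_fun_approx_real n)).
have mapprox0 n :=
  measurable_mul_comp mal0 mbe0 (measurable_step_fun (step_fun_approx_real n)).
have := cvg_integral_dominated_approx mu mapprox integrable_mul_transfer
  (dominated_approx_real_mul al be).
have -> : (fun n => \int[mu]_x (approx_real n (al x) * approx_real n (be x))%:E)%E =
    (fun n => \int[mu0]_x (approx_real n (al0 x) * approx_real n (be0 x))%:E)%E.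
  by apply/funext => n; apply: integral_step_fun_transfer; exact: step_fun_approx_real.
move=> /cvg_unique; apply=> //.
exact: cvg_integral_dominated_approx mapprox0 integrable_mul0
  (dominated_approx_real_mul al0 be0).
Qed.

End moment_transfer.

Lemma same_joint_law_rect {R : realType} {dT dT0 : measure_display}
    {T : measurableType dT} {T0 : measurableType dT0}
    {P : probability T R} {P0 : probability T0 R} {n : nat}
    {a b : T -> 'rV[R]_n} {a0 b0 : T0 -> 'rV[R]_n} :
  same_joint_law P P0 a b a0 b0 ->
  forall j l (S S' : set R), measurable S -> measurable S' ->
  P ((fun x => a x 0 j) @^-1` S `&` (fun x => b x 0 l) @^-1` S') =
  P0 ((fun x => a0 x 0 j) @^-1` S `&` (fun x => b0 x 0 l) @^-1` S').
Proof.
move=> law j l S S' mS mS'.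
have rect (U : Type) (X Y : U -> 'rV[R]_n) :
  [set x | (forall i, (if i == j then S else setT) (X x 0 i)) /\
           (forall i, (if i == l then S' else setT) (Y x 0 i))] =
  (fun x => X x 0 j) @^-1` S `&` (fun x => Y x 0 l) @^-1` S'.
  apply/seteqP; split=> x /= [Xx Yx].
    by split; [have := Xx j | have := Yx l]; rewrite eqxx.
  by split=> i; case: eqP => [->|].
rewrite -!rect; apply: (law (fun i => if i == j then S else setT)
  (fun i => if i == l then S' else setT)) => i; by case: eqP.
Qed.

Lemma prod_inj_pick {R : comPzSemiRingType} {m k : nat} (f : 'I_m -> 'I_k)
    (F : 'I_k -> 'I_m -> R) : injective f ->
  \prod_j F (f j) j = \prod_i (if [pick j | f j == i] is Some j then F i j else 1).
Proof.
move=> f_inj.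
rewrite (bigID (mem (f @: [set: 'I_m]%SET))) /= [X in _ * X]big1 ?mulr1; last first.
  by move=> i fi; case: pickP => // j /eqP fj; move: fi; rewrite -fj imset_f ?inE.
rewrite big_imset /=; last by move=> x y _ _; exact: f_inj.
apply: congr_big => // [j|j _]; first by rewrite inE.
by case: pickP => [j' /eqP /f_inj -> //|/(_ j)]; rewrite eqxx.
Qed.

Section row_moments.
Context {R : realType} {dT0 : measure_display} {T0 : measurableType dT0}
  {dT : measure_display} {T : measurableType dT}.
Context {n k : nat} {P0 : probability T0 R} {a b : T0 -> 'rV[R]_n}
  {P : probability T R} {ak bk : 'I_k -> T -> 'rV[R]_n}.
Hypothesis ma : forall j, measurable_fun setT (fun x => a x 0 j).
Hypothesis mb : forall j, measurable_fun setT (fun x => b x 0 j).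
Hypothesis mak : forall i j, measurable_fun setT (fun x => ak i x 0 j).
Hypothesis mbk : forall i j, measurable_fun setT (fun x => bk i x 0 j).
Hypothesis indep : mutually_independent_pairs P ak bk.
Hypothesis law : forall i, same_joint_law P P0 (ak i) (bk i) a b.
Hypothesis iab : forall j l, P0.-integrable setT (fun x => (a x 0 j * b x 0 l)%:E).

Section distinct_rows.
Context {m : nat} {f : 'I_m -> 'I_k}.
Variables p q : 'I_m -> 'I_n.
Hypothesis f_inj : injective f.

(* By injectivity of f, row i contributes the single factor of the product
   whose entries it holds, or 1 if f misses i. *)
Let row_factor (phi : R -> R) x i : R :=
  if [pick j | f j == i] is Some j then phi (ak i x 0 (p j)) * phi (bk i x 0 (q j))
  else 1.

Let prod_row_factor x :
  \prod_j (ak (f j) x 0 (p j) * bk (f j) x 0 (q j)) = \prod_i row_factor id x i.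
Proof.
rewrite (prod_inj_pick _ (fun i j => ak i x 0 (p j) * bk i x 0 (q j)) f_inj).
by apply: eq_bigr => i _; rewrite /row_factor; case: pickP.
Qed.

Let measurable_row_factor phi i : measurable_fun setT phi ->
  measurable_fun setT (fun x => row_factor phi x i).
Proof.
rewrite /row_factor; case: pickP => [j _|_] mphi; last exact: measurable_cst.
exact: measurable_mul_comp.
Qed.

Let row_factor_indic_combo phi : step_fun phi ->
  exists (M : finType) (c : 'I_k -> M -> R) (E : 'I_k -> M -> set T),
    (forall i o, pair_sigma (ak i) (bk i) (E i o) /\ measurable (E i o)) /\
    forall x i, row_factor phi x i = \sum_o c i o * \1_(E i o) x.
Proof.
move=> sphi; have [I [c [S [S' [mSS' ephi2]]]]] := step_fun_mul sphi sphi.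
have [mS mS'] := all_and2 mSS'.
(* The extra index carries the constant 1 of the rows missed by f. *)
exists ('I_1 + I)%type.
exists (fun i o => if [pick j | f j == i] is Some _
  then (if o is inr l then c l else 0) else (if o is inl _ then 1 else 0)).
exists (fun i o => if [pick j | f j == i] is Some j then
  (if o is inr l then (fun x => ak i x 0 (p j)) @^-1` S l `&`
                      (fun x => bk i x 0 (q j)) @^-1` S' l else setT)
  else setT).
split=> [i o|x i]; rewrite /row_factor.
  case: pickP => [j _|_]; last by split=> //; exact: pair_sigmaT.
  case: o => [_|l]; first by split=> //; exact: pair_sigmaT.
  by split; [exact: pair_sigma_rect | exact: measurable_preimageI].
case: pickP => [j _|_]; rewrite big_sumType big_ord1 /=.
  by rewrite mul0r add0r ephi2; apply: eq_bigr => l _; rewrite indicI.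
by rewrite mul1r indicT big1 ?addr0 // => l _; rewrite mul0r.
Qed.

Let integral_prod_row_factor phi : step_fun phi ->
  (\int[P]_x (\prod_i row_factor phi x i)%:E =
    (\prod_i fine (\int[P]_x (row_factor phi x i)%:E))%:E)%E.
Proof.
move=> /row_factor_indic_combo[M [c [E [sE ephi]]]].
have [sigE mE] := all_and2 (fun i => all_and2 (sE i)).
under eq_integral do under eq_bigr do rewrite ephi.
rewrite (integral_prod_indep_combo indep _ _ _ sigE mE); congr (_%:E).
apply: eq_bigr => i _.
under eq_integral do rewrite ephi.
by rewrite (integral_indic_combo _ _ _ _ (mE i)).
Qed.

Let row_factor_norm_approx i :
  monotone_approx (fun N x => row_factor (approx_norm N) x i) (row_factor id ^~ i).
Proof.
rewrite /row_factor; case: pickP => [j _|_]; last exact: monotone_approx1.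
exact: monotone_approx_norm_mul.
Qed.

Let row_factor_real_approx i :
  dominated_approx (fun N x => row_factor (approx_real N) x i) (row_factor id ^~ i).
Proof.
rewrite /row_factor; case: pickP => [j _|_]; last exact: dominated_approx1.
exact: dominated_approx_real_mul.
Qed.

Let integrable_row_factor i : P.-integrable setT (fun x => (row_factor id x i)%:E).
Proof.
rewrite /row_factor; case: pickP => [j _|_]; last exact: finite_measure_integrable_cst.
exact: integrable_mul_transfer (mak i (p j)) (mbk i (q j)) (ma (p j)) (mb (q j))
  (same_joint_law_rect (law i) _ _) (iab _ _).
Qed.

Let integral_row_factor i : fine (\int[P]_x (row_factor id x i)%:E)%E =
  if [pick j | f j == i] is Some j
  then fine ('E_P0[(fun x => a x 0 (p j) * b x 0 (q j))%R])%E else 1.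
Proof.
rewrite /row_factor; case: pickP => [j _|_].
  by rewrite unlock (integral_mul_transfer (mak i (p j)) (mbk i (q j)) (ma (p j))
    (mb (q j)) (same_joint_law_rect (law i) _ _) (iab _ _)).
rewrite integral_cst // mul1e; set PT := (X in fine X).
by have -> : PT = 1%E by exact: probability_setT.
Qed.

Let cvg_integral_row_factor_norm i :
  fine (\int[P]_x (row_factor (approx_norm N) x i)%:E)%E @[N --> \oo] -->
  fine (\int[P]_x `|row_factor id x i|%:E)%E.
Proof.
apply: fine_cvg; rewrite fineK.
  apply: (cvg_integral_monotone_approx P _ (row_factor_norm_approx i)).
  move=> N; apply: measurable_row_factor.
  exact: measurable_step_fun (step_fun_approx_norm N).
rewrite (eq_integral (abse \o (fun x => (row_factor id x i)%:E))) => [|x _] //.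
by apply: integrable_fin_num => //; exact: integrable_abse.
Qed.

Let cvg_integral_row_factor_real i :
  fine (\int[P]_x (row_factor (approx_real N) x i)%:E)%E @[N --> \oo] -->
  fine (\int[P]_x (row_factor id x i)%:E)%E.
Proof.
apply: fine_cvg; rewrite fineK; last exact: integrable_fin_num.
apply: (cvg_integral_dominated_approx P _ _ (row_factor_real_approx i)) => // N.
apply: measurable_row_factor; exact: measurable_step_fun (step_fun_approx_real N).
Qed.

Lemma expectation_prod_distinct_rows :
  P.-integrable setT
    (fun x => (\prod_j (ak (f j) x 0 (p j) * bk (f j) x 0 (q j)))%:E) /\
  (\int[P]_x (\prod_j (ak (f j) x 0 (p j) * bk (f j) x 0 (q j)))%:E =
    (\prod_j fine ('E_P0[(fun x => a x 0 (p j) * b x 0 (q j))%R]))%:E)%E.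
Proof.
under eq_fun do rewrite prod_row_factor.
have -> : \prod_j fine 'E_P0[(fun x => a x 0 (p j) * b x 0 (q j))%R]%E =
    \prod_i fine (\int[P]_x (row_factor id x i)%:E)%E.
  rewrite (prod_inj_pick _ (fun _ j => fine 'E_P0[_]%E) f_inj).
  by apply: eq_bigr => i _; rewrite integral_row_factor.
have mprod phi : measurable_fun setT phi ->
    measurable_fun setT (fun x => \prod_i row_factor phi x i).
  by move=> mphi; apply: measurable_prod => i _; exact: measurable_row_factor.
have integrable_prod : P.-integrable setT (fun x => (\prod_i row_factor id x i)%:E).
  apply: (integrable_monotone_approx P
    (\prod_i fine (\int[P]_x `|row_factor id x i|%:E)%E) _
    (mprod _ (@measurable_id _ _ setT)) (monotone_approx_prod _ row_factor_norm_approx)).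
    by move=> N; apply: mprod; exact: measurable_step_fun (step_fun_approx_norm N).
  under eq_fun => N do rewrite (integral_prod_row_factor _ (step_fun_approx_norm N)).
  exact/cvgr_EFin/cvg_bigprod.
split=> //.
have := cvg_integral_dominated_approx P
  (fun N => mprod _ (measurable_step_fun (step_fun_approx_real N))) integrable_prod
  (dominated_approx_prod _ row_factor_real_approx).
under eq_fun => N do rewrite (integral_prod_row_factor _ (step_fun_approx_real N)).
move=> /cvg_unique; apply=> //.
exact/cvgr_EFin/cvg_bigprod.
Qed.

End distinct_rows.

Lemma expectation_row_sum (f : {ffun 'I_n -> 'I_k}) : injectiveb f ->
  P.-integrable setT (fun x => (\sum_(s : 'S_n) (-1) ^+ s *
    \prod_j (ak (f j) x 0 j * bk (f j) x 0 (s j)))%:E) /\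
  (\int[P]_x (\sum_(s : 'S_n) (-1) ^+ s *
    \prod_j (ak (f j) x 0 j * bk (f j) x 0 (s j)))%:E =
   (\det (\matrix_(j, l) fine ('E_P0[(fun x => a x 0 j * b x 0 l)%R])%E))%:E)%E.
Proof.
move=> /injectiveP f_inj; set M := \matrix_(j, l) _.
have signed_term (s : 'S_n) : P.-integrable setT (fun x => ((-1) ^+ s *
      \prod_j (ak (f j) x 0 j * bk (f j) x 0 (s j)))%:E) /\
    (\int[P]_x ((-1) ^+ s * \prod_j (ak (f j) x 0 j * bk (f j) x 0 (s j)))%:E =
      ((-1) ^+ s * \prod_j M j (s j))%:E)%E.
  have [int_prod E_prod] := expectation_prod_distinct_rows id s f_inj.
  under eq_fun do rewrite EFinM; split; first exact: integrableZl.
  rewrite integralZl // E_prod -EFinM; congr (_ * _)%:E.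
  by apply: eq_bigr => j _; rewrite mxE unlock.
have [int_sum ->] := integral_bigsum P predT _ (fun s _ => (signed_term s).1).
split=> //; rewrite /determinant -sumEFin; apply: eq_bigr => s _.
exact: (signed_term s).2.
Qed.

End row_moments.

Lemma det_trmx_mulmx {R : comPzRingType} (d k : nat) (A B : 'M[R]_(k, d)) :
  \det (A^T *m B) = \sum_(f : {ffun 'I_d -> 'I_k} | injectiveb f)
    \sum_(s : 'S_d) (-1) ^+ s * \prod_j (A (f j) j * B (f j) (s j)).
Proof.
have row_det (f : {ffun 'I_d -> 'I_k}) :
    \sum_(s : 'S_d) (-1) ^+ s * \prod_j (A (f j) j * B (f j) (s j)) =
    (\prod_j A (f j) j) * \det (\matrix_(j, l) B (f j) l).
  rewrite /determinant mulr_sumr; apply: eq_bigr => s _.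
  by rewrite big_split /= mulrCA; congr (_ * (_ * _)); apply: eq_bigr => j _; rewrite mxE.
have -> : \det (A^T *m B) = \sum_(f : {ffun 'I_d -> 'I_k})
    (\prod_j A (f j) j) * \det (\matrix_(j, l) B (f j) l).
  rewrite -(eq_bigr _ (fun f _ => row_det f)) exchange_big /= /determinant.
  apply: eq_bigr => s _; rewrite -mulr_sumr; congr (_ * _).
  rewrite (eq_bigr (fun j => \sum_i A i j * B i (s j))); last first.
    by move=> j _; rewrite !mxE; apply: eq_bigr => i _; rewrite mxE.
  by rewrite bigA_distr_bigA.
rewrite (bigID (fun f : {ffun 'I_d -> 'I_k} => injectiveb f)) /= [X in _ + X]big1.
  by rewrite addr0; apply: eq_bigr => f _; rewrite row_det.
move=> f /injectivePn [j1 [j2 j12 fj12]].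
by rewrite (determinant_alternate j12) ?mulr0 // => l; rewrite !mxE fj12.
Qed.

Theorem lemma1 (R : realType) (d k : nat)
  (dT0 : measure_display) (T0 : measurableType dT0) (P0 : probability T0 R)
  (a b : T0 -> 'rV[R]_d)
  (dT : measure_display) (T : measurableType dT) (P : probability T R)
  (ak bk : 'I_k -> T -> 'rV[R]_d) :
  (d <= k)%N ->
  (forall j, measurable_fun setT (fun x => a x 0 j)) ->
  (forall j, measurable_fun setT (fun x => b x 0 j)) ->
  (forall i j, measurable_fun setT (fun x => ak i x 0 j)) ->
  (forall i j, measurable_fun setT (fun x => bk i x 0 j)) ->
  mutually_independent_pairs P ak bk ->
  (forall i, same_joint_law P P0 (ak i) (bk i) a b) ->
  (forall j l, P0.-integrable setT (fun x => (a x 0 j * b x 0 l)%:E)) ->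
  P.-integrable setT
    (fun x => (\det ((stack_rows ak x)^T *m stack_rows bk x))%:E) /\
  ('E_P[(fun x => \det ((stack_rows ak x)^T *m stack_rows bk x))%R])%E =
    ((d`! * 'C(k, d))%:R *
      \det (\matrix_(j < d, l < d) fine ('E_P0[(fun x => a x 0 j * b x 0 l)%R])%E))%:E.
Proof.
(* For d > k there are no injective maps 'I_d -> 'I_k and both sides vanish. *)
move=> _ ma mb mak mbk indep law iab.
pose row_sum (f : {ffun 'I_d -> 'I_k}) x := \sum_(s : 'S_d) (-1) ^+ s *
  \prod_j (ak (f j) x 0 j * bk (f j) x 0 (s j)).
have detE x : \det ((stack_rows ak x)^T *m stack_rows bk x) =
    \sum_(f : {ffun 'I_d -> 'I_k} | injectiveb f) row_sum f x.
  rewrite det_trmx_mulmx; apply: eq_bigr => f _; apply: eq_bigr => s _.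
  by congr (_ * _); apply: eq_bigr => j _; rewrite !mxE.
have row_sumE f f_inj :=
  expectation_row_sum ma mb mak mbk indep law iab f f_inj.
have [int_det E_det] := integral_bigsum P
  (fun f : {ffun 'I_d -> 'I_k} => injectiveb f) row_sum
  (fun f f_inj => (row_sumE f f_inj).1).
split; first by under eq_fun do rewrite detE.
rewrite {1}unlock /=; under eq_integral do rewrite detE.
rewrite E_det (eq_bigr _ (fun f f_inj => (row_sumE f f_inj).2)).
rewrite sumEFin sumr_const mulr_natl; congr (_ *+ _)%:E.
have := card_inj_ffuns 'I_d 'I_k; rewrite !card_ord -bin_ffact mulnC => <-.
by apply: eq_card => f; rewrite inE.
Qed.
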